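(* Let $S\in\mathbb{R}^{q\times q}$ be unknown, have no eigenvalues with negative real part, and have all entries bounded by $|S_{ij}|\le\epsilon$ for a known $\epsilon>0$. Let $\mathcal{G}$ be a directed weighted graph on nodes $\mathbf{v}_0$ (leader), $\mathbf{v}_1,\dots,\mathbf{v}_N$ (followers) with nonnegative weights $a_{ij}$, containing a directed spanning tree rooted at $\mathbf{v}_0$, whose Laplacian $\mathcal{L}$ has every nonzero entry satisfying $\varepsilon_1\le|\mathcal{L}_{ij}|\le\varepsilon_2$ for constants $0<\varepsilon_1\le\varepsilon_2$. Let $H\in\mathbb{R}^{N\times N}$ be given by $H_{ii}=\sum_{j=0,\,j\neq i}^{N}a_{ij}$ and $H_{ij}=-a_{ij}$ ($i\neq j$, $i,j\ge1$). If $\mu>\dfrac{q\epsilon N(2\varepsilon_2)^{N-1}}{\varepsilon_1^{N}}$, then $(I_N\otimes S)-\mu(H\otimes I_q)$ is Hurwitz.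
   Context: The Laplacian is $\mathcal{L}=\mathcal{D}-\mathcal{A}$ with $\mathcal{A}=(a_{ij})$ ($a_{ij}>0$ iff $\mathbf{v}_i$ receives information from $\mathbf{v}_j$; the leader receives none) and $\mathcal{D}$ the diagonal in-degree matrix; $H$ is its follower block. Hurwitz means all eigenvalues have negative real part. *)

From HB Require Import structures.
From mathcomp Require Import all_boot all_order all_algebra.
From mathcomp Require Export complex mxtens.
Set Implicit Arguments. Unset Strict Implicit. Unset Printing Implicit Defensive.
Import Order.TTheory GRing.Theory Num.Theory.
Local Open Scope ring_scope.

Definition ceigenvalue (R : rcfType) (n : nat) (A : 'M[R]_n) (z : R[i]) : bool :=
  eigenvalue (map_mx (real_complex R) A) z.

Definition hurwitz (R : rcfType) (n : nat) (A : 'M[R]_n) : Prop :=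
  forall z : R[i], ceigenvalue A z -> complex.Re z < 0.

Definition no_neg_re_eig (R : rcfType) (n : nat) (A : 'M[R]_n) : Prop :=
  forall z : R[i], ceigenvalue A z -> 0 <= complex.Re z.

(* Graph on nodes 0 (leader), 1..N (followers), adjacency a : 'M_(N.+1),
   a i j > 0 iff v_i receives information from v_j (edge j -> i). *)
Definition in_degree (R : rcfType) (N : nat) (a : 'M[R]_N.+1) : 'M[R]_N.+1 :=
  diag_mx (\row_i \sum_(j < N.+1 | j != i) a i j).

Definition laplacian (R : rcfType) (N : nat) (a : 'M[R]_N.+1) : 'M[R]_N.+1 :=
  in_degree a - a.

Definition follower_block (R : rcfType) (N : nat) (a : 'M[R]_N.+1) : 'M[R]_N :=
  \matrix_(i < N, j < N) laplacian a (lift ord0 i) (lift ord0 j).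

Definition has_spanning_tree_from_leader (R : rcfType) (N : nat) (a : 'M[R]_N.+1) : Prop :=
  forall i : 'I_N.+1, connect (fun j i : 'I_N.+1 => 0 < a i j) ord0 i.

(* An eigenvector of (I ⊗ S) - mu (H ⊗ I), reshaped into an N x q matrix V, satisfies
   V S = (z + mu H^T) V, so S and z + mu H^T share an eigenvalue: every eigenvalue is
   z = s - mu l with s an eigenvalue of S and l one of H.  Row sums give Re s <= q eps.
   For H, let d(k) be the length of a shortest path from the leader to k and
   x_k = 1 - y^d(k) with y = eps1 / (eps1 + eps2).  Each follower has an in-neighbour
   of smaller depth with weight >= eps1 and total in-weight <= eps2, whence
   H x >= eps2 y^N componentwise while 0 < x <= 1 - y^N.  As H has nonpositive
   off-diagonal entries, looking at the largest ratio |w_i| / x_i of an eigenvector w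
   gives Re l >= eps2 y^N / (1 - y^N), which is at least eps1^N / (N (2 eps2)^(N-1))
   because (eps1 + eps2)^N - eps1^N <= N eps2 (2 eps2)^(N-1). *)

From HB Require Import structures.
From mathcomp Require Import all_boot all_order all_algebra.
From mathcomp Require Import complex mxtens.
From mathcomp Require Import ring lra.
Set Implicit Arguments.
Unset Strict Implicit.
Unset Printing Implicit Defensive.

Import Order.TTheory GRing.Theory Num.Theory.
Local Open Scope ring_scope.

Lemma eigenvalue_trmx (F : fieldType) n (A : 'M[F]_n) a :
  eigenvalue A^T a = eigenvalue A a.
Proof.
rewrite !eigenvalue_root_char /char_poly /char_poly_mx -det_tr.
by rewrite raddfB /= tr_scalar_mx -map_trmx trmxK.
Qed.

Lemma eigenvalue_dim0 (F : fieldType) n (A : 'M[F]_n) a : n = 0%N -> ~~ eigenvalue A a.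
Proof.
move=> n0; apply/negP => /eigenvalueP [v _ /eqP]; apply; apply/rowP => j.
by have := ltn_ord j; rewrite {2}n0.
Qed.

Lemma eigenvalue_affine (F : fieldType) n (A : 'M[F]_n) a c t : c != 0 ->
  eigenvalue (a%:M + c *: A) t = eigenvalue A ((t - a) / c).
Proof.
move=> c0; apply/eigenvalueP/eigenvalueP => -[v hv v0]; exists v => //.
  have cvA : c *: (v *m A) = (t - a) *: v.
    by rewrite scalerBl -hv mulmxDr mul_mx_scalar -scalemxAr addrC addKr.
  by rewrite -(scalerK c0 (v *m A)) cvA scalerA mulrC.
rewrite mulmxDr mul_mx_scalar -scalemxAr hv scalerA mulrCA divff // mulr1.
by rewrite -scalerDl addrC subrK.
Qed.

Lemma horner_mx_intertwine (F : comNzRingType) m n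
    (S : 'M[F]_m.+1) (T : 'M[F]_n.+1) (V : 'M[F]_(n.+1, m.+1)) :
  V *m S = T *m V -> forall p, V *m horner_mx S p = horner_mx T p *m V.
Proof.
move=> VS_TV; elim/poly_ind => [|p c IH]; first by rewrite !rmorph0 mulmx0 mul0mx.
rewrite !rmorphD !rmorphM /= !horner_mx_X !horner_mx_C -!mulmxE.
rewrite mulmxDr mulmxDl mulmxA IH -[_ *m V *m S]mulmxA VS_TV mulmxA.
by rewrite mul_mx_scalar mul_scalar_mx.
Qed.

Lemma intertwining_common_eigenvalue (F : closedFieldType) m n
    (S : 'M[F]_m.+1) (T : 'M[F]_n.+1) (V : 'M[F]_(n.+1, m.+1)) :
  V != 0 -> V *m S = T *m V -> exists2 s, eigenvalue S s & eigenvalue T s.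
Proof.
move=> V0 VS_TV; have [rs def_chS] := closed_field_poly_normal (char_poly S).
rewrite (monicP (char_poly_monic S)) scale1r in def_chS.
have [/hasP[r r_rs Tr] | /hasPn noT] := boolP (has (eigenvalue T) rs).
  by exists r => //; rewrite eigenvalue_root_char def_chS root_prod_XsubC.
have unitT : horner_mx T (char_poly S) \in unitmx.
  rewrite def_chS rmorph_prod big_seq.
  apply: (big_ind (fun M : 'M_n.+1 => M \in unitmx)) => [|M1 M2|r r_rs].
  - exact: unitmx1.
  - by rewrite unitmx_mul => -> ->.
  rewrite rmorphB /= horner_mx_X horner_mx_C -row_free_unit -kermx_eq0.
  by have := noT r r_rs; rewrite /eigenvalue /eigenspace negbK.
case/eqP: V0; rewrite -(mulKmx unitT V) -(horner_mx_intertwine VS_TV).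
by rewrite Cayley_Hamilton !mulmx0.
Qed.

Section MxtensUnvec.
Variable R : comPzRingType.

Definition mxtens_unvec m p : 'rV[R]_(m * p) -> 'M[R]_(m, p) :=
  swizzle_mx (fun _ _ => 0) (fun i j => mxtens_index (i, j)) matrix_key.

HB.instance Definition _ m p :=
  GRing.Linear.copy (@mxtens_unvec m p) (swizzle_mx _ _ _).

Lemma mxtens_unvec_eq0 m p (v : 'rV[R]_(m * p)) :
  (mxtens_unvec v == 0) = (v == 0).
Proof.
apply/eqP/eqP => [/matrixP v0 | ->]; last exact: linear0.
apply/rowP => k; case: (mxtens_indexP k) => i j.
by have := v0 i j; rewrite !mxE.
Qed.

Lemma mxtens_unvec_mul m n p r (v : 'rV[R]_(m * p))
    (X : 'M[R]_(m, n)) (Y : 'M[R]_(p, r)) :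
  mxtens_unvec (v *m (X *t Y)) = X^T *m mxtens_unvec v *m Y.
Proof.
apply/matrixP => k l; rewrite !mxE (reindex (@mxtens_index m p)) /=; last first.
  by exists (@mxtens_unindex m p) => x _; [apply: mxtens_indexK | apply: mxtens_unindexK].
under [RHS]eq_bigr do rewrite mxE mulr_suml.
rewrite exchange_big pair_big /=; apply: eq_bigr => -[i j] _ /=.
by rewrite tensmxE !mxE mulrA [_ * X i k]mulrC.
Qed.
End MxtensUnvec.

Lemma eigenvalue_kronecker_sum (F : closedFieldType) m n
    (A : 'M[F]_m) (B : 'M[F]_n) c z :
  c != 0 -> eigenvalue (1%:M *t B - c *: (A *t 1%:M)) z ->
  exists2 s, eigenvalue B s & eigenvalue A ((s - z) / c).
Proof.
move=> c0; case: m A => [|m] A; first by rewrite (negbTE (eigenvalue_dim0 _ _ _)).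
case: n B => [|n] B; first by rewrite (negbTE (eigenvalue_dim0 _ _ (muln0 _))).
case/eigenvalueP => v hv v0; set V := mxtens_unvec v.
have VB : V *m B = (z%:M + c *: A^T) *m V.
  move/(congr1 (@mxtens_unvec _ _ _)): hv.
  rewrite mulmxBr -scalemxAr !linearB !linearZ /= !mxtens_unvec_mul.
  rewrite trmx1 mul1mx mulmx1 scalerN -/V => /eqP; rewrite subr_eq => /eqP ->.
  by rewrite mulmxDl mul_scalar_mx scalemxAl.
have V0 : V != 0 by rewrite mxtens_unvec_eq0.
have [s Bs] := intertwining_common_eigenvalue V0 VB.
by exists s; rewrite // -eigenvalue_trmx -eigenvalue_affine.
Qed.

Section ComplexEigenvalueBounds.
Import ComplexField.Normc.
Local Open Scope complex_scope.
Variable R : rcfType.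
Implicit Types x y : R[i].

Lemma normc_ge0 x : 0 <= normc x.
Proof. by case: x => a b /=; rewrite sqrtr_ge0. Qed.

Lemma normc_real (r : R) : normc r%:C = `|r|.
Proof. by rewrite /= expr0n /= addr0 sqrtr_sqr. Qed.

Lemma Re_le_normc x : `|complex.Re x| <= normc x.
Proof.
case: x => a b /=; rewrite -sqrtr_sqr ler_sqrt ?addr_ge0 ?sqr_ge0 //.
by rewrite lerDl sqr_ge0.
Qed.

Lemma normc_sum (I : Type) (r : seq I) (P : pred I) (F : I -> R[i]) :
  normc (\sum_(j <- r | P j) F j) <= \sum_(j <- r | P j) normc (F j).
Proof.
elim/big_rec2: _ => [|j y1 y2 _ IH]; first by rewrite normc0.
by apply: le_trans (le_normcD _ _) _; rewrite lerD2l.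
Qed.

Lemma normc_ceigenvalue_le q (S : 'M[R]_q) (eps : R) s :
  (forall i j, `|S i j| <= eps) -> ceigenvalue S s -> normc s <= q%:R * eps.
Proof.
move=> S_le /eigenvalueP [u Su u0].
pose U := \sum_i normc (u 0 i).
have U_gt0 : 0 < U.
  rewrite lt_def sumr_ge0 ?andbT => [|i _]; last exact: normc_ge0.
  apply: contra u0 => /eqP /psumr_eq0P u_eq0; apply/eqP/rowP => j.
  by rewrite mxE; apply: eq0_normc; apply: u_eq0 => // i _; apply: normc_ge0.
have su_le j : normc s * normc (u 0 j) <= eps * U.
  move/rowP/(_ j): Su; rewrite !mxE -normcM => <-.
  apply: le_trans (normc_sum _ _ _) _; rewrite /U mulr_sumr; apply: ler_sum => i _.
  by rewrite normcM mxE normc_real mulrC ler_wpM2r ?normc_ge0.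
rewrite -(ler_pM2r U_gt0) {1}/U mulr_sumr.
apply: le_trans (ler_sum _ (fun j _ => su_le j)) _.
by rewrite sumr_const card_ord -mulrA mulr_natl.
Qed.

Lemma Re_ceigenvalue_le q (S : 'M[R]_q) (eps : R) s :
  (forall i j, `|S i j| <= eps) -> ceigenvalue S s -> complex.Re s <= q%:R * eps.
Proof.
move=> S_le Ss; apply: le_trans (ler_norm _) _.
exact: le_trans (Re_le_normc s) (normc_ceigenvalue_le S_le Ss).
Qed.

Lemma Re_eigenvector_ge_Zmatrix n (H : 'M[R]_n.+1) (x : 'I_n.+1 -> R) (c X : R) l
    (w : 'cV[R[i]]_n.+1) :
    (forall i j, i != j -> H i j <= 0) -> (forall i, 0 < x i) ->
    (forall i, x i <= X) -> (forall i, c <= \sum_j H i j * x j) -> 0 < c ->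
  map_mx (real_complex R) H *m w = l *: w -> w != 0 -> c / X <= complex.Re l.
Proof.
move=> H_offdiag x_gt0 x_le Hx_ge c_gt0 Hw w0.
pose f j := normc (w j 0) / x j.
have [i _ f_max] := @arg_maxP _ _ _ ord0 xpredT f isT; set rho := f i in f_max.
have w_le j : normc (w j 0) <= rho * x j.
  by move: (f_max j isT) => /=; rewrite /f ler_pdivrMr // mulrC.
have rho_gt0 : 0 < rho.
  rewrite lt_def divr_ge0 ?normc_ge0 ?ltW // andbT.
  apply: contra w0 => /eqP rho0; apply/eqP/colP => j.
  rewrite [RHS]mxE; apply: eq0_normc; apply: le_anti; rewrite normc_ge0 andbT.
  by have := w_le j; rewrite rho0 mul0r.
have wi : normc (w i 0) = rho * x i by rewrite /rho /f divfK // gt_eqF.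
have row_i : (l - (H i i)%:C) * w i 0 = \sum_(j | j != i) (H i j)%:C * w j 0.
  move/colP/(_ i): Hw; rewrite !mxE (bigD1 i) //= !mxE => Hwi.
  by rewrite mulrBl -Hwi addrAC subrr add0r; apply: eq_bigr => j _; rewrite mxE.
have shift_le : normc (l - (H i i)%:C) * x i <= H i i * x i - c.
  rewrite -(ler_pM2l rho_gt0) mulrCA -wi -normcM row_i.
  apply: le_trans (normc_sum _ _ _) _.
  apply: (@le_trans _ _ (\sum_(j | j != i) rho * (- H i j * x j))).
    apply: ler_sum => j ji; rewrite normcM normc_real ler0_norm; last first.
      by rewrite H_offdiag // eq_sym.
    by rewrite mulrCA ler_wpM2l // oppr_ge0 H_offdiag // eq_sym.
  rewrite -mulr_sumr; apply: ler_wpM2l; first exact: ltW.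
  under eq_bigr do rewrite mulNr.
  by have := Hx_ge i; rewrite (bigD1 i) //= sumrN; lra.
have Re_l : complex.Re l = H i i + complex.Re (l - (H i i)%:C).
  by case: (l) => a b /=; rewrite addrC subrK.
have := Re_le_normc (l - (H i i)%:C); rewrite ler_norml => /andP[Re_ge _].
have xi_gt0 := x_gt0 i; have xi_le := x_le i.
have c_le : c <= complex.Re l * x i by nra.
have Re_gt0 : 0 < complex.Re l by nra.
rewrite ler_pdivrMr; last exact: lt_le_trans xi_le.
nra.
Qed.

Lemma Re_ceigenvalue_ge_Zmatrix n (H : 'M[R]_n) (x : 'I_n -> R) (c X : R) l :
    (forall i j, i != j -> H i j <= 0) -> (forall i, 0 < x i) ->
    (forall i, x i <= X) -> (forall i, c <= \sum_j H i j * x j) -> 0 < c ->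
  ceigenvalue H l -> c / X <= complex.Re l.
Proof.
case: n H x => [|n] H x H_offdiag x_gt0 x_le Hx_ge c_gt0.
  by rewrite /ceigenvalue (negbTE (eigenvalue_dim0 _ _ _)).
rewrite /ceigenvalue -eigenvalue_trmx => /eigenvalueP [u uH u0].
apply: (Re_eigenvector_ge_Zmatrix H_offdiag x_gt0 x_le Hx_ge c_gt0 (w := u^T)).
  by rewrite -[map_mx _ H]trmxK -trmx_mul uH linearZ.
by rewrite trmx_eq0.
Qed.

End ComplexEigenvalueBounds.

Lemma exprDn_sub_le (R : realDomainType) (b e : R) n :
  0 <= b -> b <= e -> (b + e) ^+ n - b ^+ n <= n%:R * e * (2 * e) ^+ n.-1.
Proof.
move=> b_ge0 b_le_e; have e_ge0 : 0 <= e by lra.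
rewrite subrXX [_ - b]addrC addKr -mulrA mulrCA; apply: ler_wpM2l => //.
have -> : n%:R * (2 * e) ^+ n.-1 = \sum_(i < n) (2 * e) ^+ n.-1.
  by rewrite sumr_const card_ord mulr_natl.
apply: ler_sum => i _.
have le2e z k : 0 <= z -> z <= 2 * e -> z ^+ k <= (2 * e) ^+ k.
  by move=> z_ge0 z_le; rewrite lerXn2r ?nnegrE // (le_trans z_ge0).
have i_le : (i <= n.-1)%N by rewrite -ltnS prednK ?(leq_ltn_trans _ (ltn_ord i)).
rewrite -[in leRHS](subnK i_le) exprD.
by apply: ler_pM; rewrite ?exprn_ge0 ?addr_ge0 ?le2e ?addr_ge0 //; lra.
Qed.

Section LeaderDepth.
Variables (R : rcfType) (N : nat) (a : 'M[R]_N.+1).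

Fixpoint reach k : {set 'I_N.+1} :=
  if k is k'.+1 then reach k' :|: [set i | [exists j in reach k', 0 < a i j]]
  else [set ord0].

Lemma reach_path k x p : x \in reach k ->
  path (fun j i => 0 < a i j) x p -> last x p \in reach (k + size p).
Proof.
elim: p x k => [|y p IH] x k /=; first by rewrite addn0.
move=> x_k /andP[a_yx y_p]; rewrite addnS -addSn; apply: IH y_p.
by rewrite /= in_setU inE; apply/orP; right; apply/existsP; exists x; rewrite x_k.
Qed.

Hypothesis leader_tree : has_spanning_tree_from_leader a.

Lemma reach_leN i : exists2 k, (k <= N)%N & i \in reach k.
Proof.
have /connectP[p p_path ->] := leader_tree i.
have [p' p'_path p'_uniq _] := shortenP p_path.
exists (size p'); last by rewrite -[size p']add0n reach_path // inE.
by have := max_card (mem (ord0 :: p')); rewrite card_ord (card_uniqP p'_uniq).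
Qed.

Lemma reach_exists i : exists k, i \in reach k.
Proof. by have [k _ i_k] := reach_leN i; exists k. Qed.

Definition depth i := ex_minn (reach_exists i).

Lemma depth_leN i : (depth i <= N)%N.
Proof.
rewrite /depth; case: ex_minnP => m _ m_min.
by have [k k_le i_k] := reach_leN i; apply: leq_trans (m_min _ i_k) k_le.
Qed.

Lemma depth_leader : depth ord0 = 0%N.
Proof.
by rewrite /depth; case: ex_minnP => m _ /(_ 0%N); rewrite inE eqxx => /(_ isT); case: m.
Qed.

Lemma depth_parent i : i != ord0 -> exists2 p, 0 < a i p & (depth p < depth i)%N.
Proof.
move=> i0; rewrite {2}/depth; case: ex_minnP => -[|k] i_k k_min.
  by rewrite /= inE (negbTE i0) in i_k.
move: i_k; rewrite /= in_setU => /orP[i_k | ]; first by have := k_min _ i_k; rewrite ltnn.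
rewrite inE => /existsP[p /andP[p_k a_ip]]; exists p => //.
by rewrite /depth; case: ex_minnP => m _ /(_ _ p_k).
Qed.

End LeaderDepth.

Lemma laplacianE (R : rcfType) N (a : 'M[R]_N.+1) u v :
  laplacian a u v = (u == v)%:R * (\sum_(j | j != u) a u j) - a u v.
Proof. by rewrite !mxE mulr_natl. Qed.

Lemma laplacian_row_sumE (R : rcfType) N (a : 'M[R]_N.+1) u (g : 'I_N.+1 -> R) :
  a u u = 0 -> \sum_k laplacian a u k * g k = \sum_k a u k * (g u - g k).
Proof.
move=> a_uu; under eq_bigr do rewrite laplacianE.
rewrite (bigD1 u) //= [RHS](bigD1 u) //= eqxx a_uu subrr mulr0 subr0 mul1r add0r.
rewrite big_distrl -big_split /=; apply: eq_bigr => k ku.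
by rewrite eq_sym (negbTE ku) mul0r sub0r mulrBr mulNr addrC.
Qed.

Definition follower_gain (R : numFieldType) N (eps1 eps2 : R) :=
  N%:R * (2 * eps2) ^+ N.-1 / eps1 ^+ N.

Lemma follower_gain_ge0 (R : numFieldType) N (eps1 eps2 : R) :
  0 < eps1 -> eps1 <= eps2 -> 0 <= follower_gain N eps1 eps2.
Proof.
move=> eps1_gt0 eps1_le2; have eps2_ge0 := le_trans (ltW eps1_gt0) eps1_le2.
by rewrite divr_ge0 ?exprn_ge0 ?(ltW eps1_gt0) // mulr_ge0 ?exprn_ge0 ?mulr_ge0.
Qed.

Section FollowerPotential.
Variables (R : rcfType) (N : nat) (a : 'M[R]_N.+1) (eps1 eps2 : R).
Hypotheses (a_ge0 : forall i j, 0 <= a i j) (a_diag : forall i, a i i = 0).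
Hypothesis leader_tree : has_spanning_tree_from_leader a.
Hypotheses (eps1_gt0 : 0 < eps1) (eps1_le2 : eps1 <= eps2).
Hypothesis laplacian_bounds : forall i j,
  laplacian a i j != 0 -> eps1 <= `|laplacian a i j| <= eps2.

Lemma edge_weight_ge u p : 0 < a u p -> eps1 <= a u p.
Proof.
move=> a_up; have up : u != p by apply: contraTneq a_up => ->; rewrite a_diag ltxx.
have L_up : laplacian a u p = - a u p by rewrite laplacianE (negbTE up) mul0r sub0r.
have /laplacian_bounds : laplacian a u p != 0 by rewrite L_up oppr_eq0 gt_eqF.
by rewrite L_up normrN (ger0_norm (ltW a_up)) => /andP[].
Qed.

Lemma in_weight_le u p : 0 < a u p -> \sum_k a u k <= eps2.
Proof.
move=> a_up; have a_u_ge : a u p <= \sum_k a u k by rewrite (bigD1 p) //= lerDl sumr_ge0.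
have L_uu : laplacian a u u = \sum_k a u k.
  by rewrite laplacianE eqxx mul1r a_diag subr0 [RHS](bigD1 u) //= a_diag add0r.
have /laplacian_bounds : laplacian a u u != 0 by rewrite L_uu gt_eqF // (lt_le_trans a_up).
by rewrite L_uu ger0_norm ?(le_trans (ltW a_up)) // => /andP[].
Qed.

Local Notation y := (eps1 / (eps1 + eps2)).
Local Notation depth := (depth leader_tree).

Fact eps2_gt0 : 0 < eps2. Proof. exact: lt_le_trans eps1_le2. Qed.
Fact eps12_gt0 : 0 < eps1 + eps2. Proof. by rewrite addr_gt0 ?eps2_gt0. Qed.
Fact y_gt0 : 0 < y. Proof. exact: divr_gt0 eps1_gt0 eps12_gt0. Qed.
Fact y_lt1 : y < 1.
Proof. by rewrite ltr_pdivrMr ?eps12_gt0 // mul1r ltrDl eps2_gt0. Qed.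
Fact eps1E : eps1 = (eps1 + eps2) * y.
Proof. by rewrite mulrC divfK // lt0r_neq0 // eps12_gt0. Qed.

Local Notation potential k := (1 - y ^+ depth k).

Lemma potential_leader : potential ord0 = 0.
Proof. by rewrite depth_leader expr0 subrr. Qed.

Lemma potential_gt0 i : i != ord0 -> 0 < potential i.
Proof.
move=> i0; have [p _ depth_p] := depth_parent leader_tree i0.
by rewrite subr_gt0 exprn_ilt1 ?(ltW y_gt0) ?y_lt1 // -lt0n (leq_ltn_trans _ depth_p).
Qed.

Lemma potential_le i : potential i <= 1 - y ^+ N.
Proof.
by rewrite lerD2l lerN2 ler_wiXn2l ?(ltW y_gt0) ?(ltW y_lt1) ?depth_leN.
Qed.

Lemma laplacian_potential_ge u : u != ord0 ->
  eps2 * y ^+ N <= \sum_k laplacian a u k * potential k.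
Proof.
move=> u0; rewrite laplacian_row_sumE //.
have [p a_up depth_p] := depth_parent leader_tree u0.
have a_up_ge := edge_weight_ge a_up; have D_le := in_weight_le a_up.
set D := \sum_k a u k in D_le *.
have -> : \sum_k a u k * (potential u - potential k) =
    \sum_k a u k * (y ^+ depth k - y ^+ N) + D * (y ^+ N - y ^+ depth u).
  rewrite /D big_distrl -big_split /=; apply: eq_bigr => k _.
  by rewrite -mulrDr; congr (_ * _); lra.
have y_ge0 := ltW y_gt0; have y_le1 := ltW y_lt1.
have yX_le m n : (m <= n)%N -> y ^+ n <= y ^+ m by move=> mn; apply: ler_wiXn2l.
have parent_term :
    a u p * (y ^+ depth p - y ^+ N) <= \sum_k a u k * (y ^+ depth k - y ^+ N).
  rewrite (bigD1 p) //= lerDl; apply: sumr_ge0 => k _.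
  by rewrite mulr_ge0 ?subr_ge0 ?yX_le ?depth_leN.
move: depth_p (yX_le _ _ (depth_leN leader_tree u)); case: (depth u) => // k.
rewrite ltnS exprS => /yX_le P_le Y_le.
set Y := y ^+ N in parent_term Y_le *; set P := y ^+ k in P_le Y_le *.
have P_ge0 : 0 <= P by rewrite exprn_ge0.
have Y_le_P : Y <= P by apply: le_trans Y_le _; rewrite ler_piMl.
have parent_ge : eps1 * (P - Y) <= a u p * (y ^+ depth p - Y).
  by apply: ler_pM; rewrite ?subr_ge0 ?lerD2r ?(ltW eps1_gt0).
have degree_ge : eps2 * (Y - y * P) <= D * (Y - y * P).
  by apply: ler_wnM2r; rewrite ?subr_le0.
have eps1P : eps1 * P - eps2 * (y * P) = eps1 * (y * P) by rewrite {1}eps1E; ring.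
have : eps1 * Y <= eps1 * (y * P) by rewrite ler_pM2l.
lra.
Qed.

Lemma potential_gap_le :
  1 - y ^+ N <= follower_gain N eps1 eps2 * (eps2 * y ^+ N).
Proof.
have s_gt0 : 0 < (eps1 + eps2) ^+ N by rewrite exprn_gt0 ?eps12_gt0.
have e_gt0 : 0 < eps1 ^+ N by rewrite exprn_gt0.
rewrite /follower_gain expr_div_n -(ler_pM2r s_gt0) mulrBl mul1r divfK ?gt_eqF //.
have -> : N%:R * (2 * eps2) ^+ N.-1 / eps1 ^+ N *
    (eps2 * (eps1 ^+ N / (eps1 + eps2) ^+ N)) * (eps1 + eps2) ^+ N =
  N%:R * eps2 * (2 * eps2) ^+ N.-1 by field; rewrite !gt_eqF.
exact: exprDn_sub_le (ltW eps1_gt0) eps1_le2.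
Qed.

Lemma follower_block_offdiag_le0 i j : i != j -> follower_block a i j <= 0.
Proof.
move=> ij; rewrite mxE laplacianE (inj_eq lift_inj) (negbTE ij) mul0r sub0r.
by rewrite oppr_le0.
Qed.

Lemma follower_block_Re_ceigenvalue_ge l : ceigenvalue (follower_block a) l ->
  1 <= follower_gain N eps1 eps2 * complex.Re l.
Proof.
move=> hl; have [N0 | N_gt0] := posnP N.
  by move: hl; rewrite /ceigenvalue (negbTE (eigenvalue_dim0 _ _ N0)).
pose x i := potential (lift ord0 i).
have x_gt0 i : 0 < x i by rewrite potential_gt0 // eq_sym neq_lift.
have Hx_ge i : eps2 * y ^+ N <= \sum_j follower_block a i j * x j.
  rewrite (_ : \sum_j _ = \sum_k laplacian a (lift ord0 i) k * potential k).
    by rewrite laplacian_potential_ge // eq_sym neq_lift.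
  rewrite big_ord_recl potential_leader mulr0 add0r.
  by apply: eq_bigr => j _; rewrite mxE.
have c_gt0 : 0 < eps2 * y ^+ N by rewrite mulr_gt0 ?exprn_gt0 ?eps2_gt0 ?y_gt0.
have X_gt0 : 0 < 1 - y ^+ N.
  exact: lt_le_trans (x_gt0 (Ordinal N_gt0)) (potential_le _).
have := Re_ceigenvalue_ge_Zmatrix follower_block_offdiag_le0 x_gt0
  (fun i => potential_le _) Hx_ge c_gt0 hl.
rewrite ler_pdivrMr // => Re_ge; rewrite -(ler_pM2r X_gt0) mul1r -mulrA.
apply: le_trans potential_gap_le (ler_wpM2l _ Re_ge).
exact: follower_gain_ge0.
Qed.

End FollowerPotential.

Theorem proposition1 (R : rcfType) (q N : nat) (S : 'M[R]_q) (eps : R)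
    (a : 'M[R]_N.+1) (eps1 eps2 mu : R) :
  0 < eps ->
  no_neg_re_eig S ->
  (forall i j, `|S i j| <= eps) ->
  (forall i j, 0 <= a i j) ->
  (forall i, a i i = 0) ->
  (forall j, a ord0 j = 0) ->
  has_spanning_tree_from_leader a ->
  0 < eps1 -> eps1 <= eps2 ->
  (forall i j, laplacian a i j != 0 ->
     eps1 <= `|laplacian a i j| <= eps2) ->
  mu > q%:R * eps * N%:R * (2 * eps2) ^+ N.-1 / eps1 ^+ N ->
  hurwitz ((1%:M : 'M[R]_N) *t S - mu *: (follower_block a *t (1%:M : 'M[R]_q))).
Proof.
move=> eps_gt0 _ S_le a_ge0 a_diag _ tree eps1_gt0 eps1_le2 L_bounds mu_gt z.
pose K := follower_gain N eps1 eps2; pose Q := q%:R * eps.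
have Q_ge0 : 0 <= Q by rewrite mulr_ge0 ?ler0n ?ltW.
have K_ge0 : 0 <= K by apply: follower_gain_ge0.
have {mu_gt} mu_gt : Q * K < mu by rewrite /Q /K /follower_gain !mulrA.
have mu_gt0 : 0 < mu by apply: le_lt_trans mu_gt; rewrite mulr_ge0.
have muC0 : (mu%:C != 0)%C by rewrite fmorph_eq0 gt_eqF.
rewrite /ceigenvalue map_mxB map_mxZ !map_mxT !map_mx1.
case/(eigenvalue_kronecker_sum muC0) => s Ss Hl.
have Re_s : complex.Re s <= Q := Re_ceigenvalue_le S_le Ss.
have Re_l : 1 <= K * complex.Re ((s - z) / mu%:C)%C :=
  follower_block_Re_ceigenvalue_ge a_ge0 a_diag tree eps1_gt0 eps1_le2 L_bounds Hl.
have -> : z = (s - mu%:C * ((s - z) / mu%:C))%C.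
  by rewrite mulrC divfK // opprB addrC subrK.
move: ((s - z) / _)%C Re_l => l Re_l; clearbody K Q.
have -> : complex.Re (s - mu%:C * l)%C = complex.Re s - mu * complex.Re l.
  by case: (s) (l) => ? ? [? ?] /=; ring.
have Re_l_gt0 : 0 < complex.Re l by nra.
have : Q * K * complex.Re l < mu * complex.Re l by rewrite ltr_pM2r.
have : Q <= Q * (K * complex.Re l) by rewrite ler_peMr.
rewrite mulrA; lra.
Qed.
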